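(* Let $J\in\mathbb{N}_0$ and let $(a_j)_{j>J}$ be complex numbers with $\sum_{j>J}|a_j|<\infty$ and $|a_j|\ge|a_{j+1}|>0$ for all integers $j>J$. Suppose there is a convex function $\varphi\colon\,]J,\infty[\,\to\mathbb{R}$ with $\varphi(j)=j/|a_j|$ for every integer $j>J$. Then the functions $$f(t)=\sum_{j>J}a_j\exp(i t j/|a_j|),\qquad \operatorname{Re}f(t),\qquad \operatorname{Im}f(t)$$ are continuous on $\mathbb{R}$ but differentiable at no point of $\mathbb{R}$.
   Context: Sums over $j>J$ range over integers $j>J$. *)

From Stdlib Require Import Reals.
Open Scope R_scope.

(* A complex sequence a_j is given by its real part ar and imaginary part ai. *)
Definition cmod (ar ai : nat -> R) (j : nat) : R :=
  sqrt (ar j ^ 2 + ai j ^ 2).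

Definition freq (ar ai : nat -> R) (j : nat) : R := INR j / cmod ar ai j.

(* Real and imaginary parts of the term a_j exp(i t j/|a_j|). *)
Definition re_term (ar ai : nat -> R) (t : R) (j : nat) : R :=
  ar j * cos (t * freq ar ai j) - ai j * sin (t * freq ar ai j).
Definition im_term (ar ai : nat -> R) (t : R) (j : nat) : R :=
  ar j * sin (t * freq ar ai j) + ai j * cos (t * freq ar ai j).

(* Sum over integers j > J, i.e. j = J+1+n, n >= 0: the series has sum l. *)
Definition sum_gt (J : nat) (u : nat -> R) (l : R) : Prop :=
  infinite_sum (fun n => u (J + 1 + n)%nat) l.

Definition convex_on_gt (J : nat) (phi : R -> R) : Prop :=
  forall x y lam, INR J < x -> INR J < y -> 0 <= lam <= 1 ->
    phi (lam * x + (1 - lam) * y) <= lam * phi x + (1 - lam) * phi y.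

Definition differentiable_at (g : R -> R) (t : R) : Prop :=
  exists l, derivable_pt_lim g t l.

From Stdlib Require Import Reals Lra Lia Psatz.
From Coquelicot Require Import Coquelicot.
Open Scope R_scope.

(* Let F be Re f or Im f.  If F had derivative L at t0, the remainder
   F (t0 + s) - F t0 * cos s - L * sin s would be o(s).  Rescale time by |a_n| and integrate
   the remainder against K(u) times the n-th term of the series, where
   K(u) = (sin (u/5) / (u/5))^4 is a nonnegative kernel whose Fourier transform vanishes
   outside [-4/5, 4/5], so that its transforms truncated to [-W, W] are O(1/W) at all
   frequencies >= 1.  After rescaling, the n-th term has frequency n, every other term has a
   frequency at distance >= 1 from n (because |a_j| decreases), and cos, sin have frequency
   |a_n| <= 1; hence only the n-th term contributes, and the integral is of order |a_n|^2.
   The o(s) bound makes it o(|a_n|^2), a contradiction for large n.  Continuity is the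
   Weierstrass M-test. *)

Lemma Rabs_sin_le x : Rabs (sin x) <= Rabs x.
Proof.
  assert (Hpos : forall y, 0 <= y -> Rabs (sin y) <= y).
  { intros y Hy. destruct (Rle_dec y 1) as [Hy1|Hy1].
    - destruct (Req_dec y 0) as [->|Hy0]; [rewrite sin_0, Rabs_R0; lra|].
      pose proof (sin_lt_x y ltac:(lra)).
      assert (0 <= sin y) by (apply sin_ge_0; pose proof PI2_1; lra).
      rewrite Rabs_pos_eq; lra.
    - pose proof (SIN_bound y). apply Rabs_le. lra. }
  destruct (Rle_dec 0 x).
  - rewrite (Rabs_pos_eq x) by lra. auto.
  - rewrite <- (Rabs_Ropp (sin x)), <- sin_neg, (Rabs_left x) by lra. apply Hpos. lra.
Qed.

Lemma sqr_dot2_le a b c d : (a * c + b * d) * (a * c + b * d) <= (a * a + b * b) * (c * c + d * d).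
Proof. pose proof (pow2_ge_0 (a * d - b * c)). nra. Qed.

Lemma Rabs_le_of_sqr_le x y : 0 <= y -> x * x <= y * y -> Rabs x <= y.
Proof. intros Hy H. apply Rabs_le. split; nra. Qed.

Lemma Rabs_cos_sin_comb_le a b m z :
  a * a + b * b = m * m -> 0 <= m -> Rabs (a * cos z + b * sin z) <= m.
Proof.
  intros H Hm. apply Rabs_le_of_sqr_le; auto.
  pose proof (sqr_dot2_le a b (cos z) (sin z)). pose proof (sin2_cos2 z). unfold Rsqr in *. nra.
Qed.

Lemma Rabs_mul_le x y X Y : Rabs x <= X -> 0 <= y <= Y -> Rabs (y * x) <= Y * X.
Proof.
  intros Hx Hy. rewrite Rabs_mult, Rabs_pos_eq by lra.
  apply Rmult_le_compat; try lra. apply Rabs_pos.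
Qed.

Lemma le_of_le_add_div x a C W0 :
  0 <= C -> 0 < W0 -> (forall W, W0 <= W -> x <= a + C / W) -> x <= a.
Proof.
  intros HC HW0 H. destruct (Rle_dec x a) as [|Hxa]; auto. exfalso.
  set (W := W0 + 2 * C / (x - a)).
  assert (0 <= 2 * C / (x - a)) by (apply Rdiv_le_0_compat; lra).
  specialize (H W ltac:(unfold W; lra)).
  assert (C / W <= (x - a) / 2).
  { assert (HWp : 0 < W) by (unfold W; lra).
    assert (E1 : (x - a) / 2 * W = (x - a) * W0 / 2 + C) by (unfold W; field; lra).
    assert (E2 : C / W * W = C) by (field; lra).
    apply (Rmult_le_reg_r W); auto. rewrite E1, E2. nra. }
  lra.
Qed.

Lemma continuity_pt_ex_derive (f : R -> R) x : ex_derive f x -> continuity_pt f x.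
Proof.
  intros H. apply continuity_pt_filterlim.
  now apply (@ex_derive_continuous R_AbsRing R_NormedModule).
Qed.

Lemma continuity_ex_derive (f : R -> R) : (forall x, ex_derive f x) -> continuity f.
Proof. intros H x. apply continuity_pt_ex_derive, H. Qed.

Lemma continuity_pt_removable (g : R -> R) (v x : R) :
  (x <> 0 -> continuity_pt g x) ->
  (forall eps, 0 < eps -> exists d, 0 < d /\
     forall y, y <> 0 -> Rabs y < d -> Rabs (g y - v) < eps) ->
  continuity_pt (fun y => if Req_EM_T y 0 then v else g y) x.
Proof.
  intros Hg Hv. unfold continuity_pt, continue_in, limit1_in, limit_in. simpl. unfold R_dist.
  intros eps Heps.
  destruct (Req_EM_T x 0) as [->|Hx].
  - destruct (Hv eps Heps) as [d [Hd H]]. exists d. split; auto.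
    intros y [_ Hy]. rewrite Rminus_0_r in Hy.
    destruct (Req_EM_T y 0). { rewrite Rminus_diag, Rabs_R0; lra. }
    now apply H.
  - destruct (Hg Hx eps Heps) as [d [Hd H]]. simpl in H. unfold R_dist in H.
    exists (Rmin d (Rabs x)). split. { apply Rmin_glb_lt; auto. now apply Rabs_pos_lt. }
    intros y [Hy1 Hy2]. pose proof (Rmin_l d (Rabs x)). pose proof (Rmin_r d (Rabs x)).
    destruct (Req_EM_T y 0) as [->|Hy].
    + rewrite Rminus_0_l, Rabs_Ropp in Hy2. lra.
    + apply H. split; auto. lra.
Qed.

Lemma ex_RInt_continuity_pt (f : R -> R) a b :
  (forall x, Rmin a b <= x <= Rmax a b -> continuity_pt f x) -> ex_RInt f a b.
Proof.
  intros H. apply (@ex_RInt_continuous R_CompleteNormedModule). intros z Hz.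
  apply continuity_pt_filterlim. now apply H.
Qed.

Lemma ex_RInt_continuity (f : R -> R) a b : continuity f -> ex_RInt f a b.
Proof. intros H. apply ex_RInt_continuity_pt. auto. Qed.

(* Coquelicot's lemmas restated with [Rplus] and [Rmult] in place of [plus] and [scal],
   so that they can be used by [rewrite]. *)
Lemma RInt_ext_R (f g : R -> R) a b :
  (forall x, Rmin a b < x < Rmax a b -> f x = g x) -> RInt f a b = RInt g a b.
Proof. apply RInt_ext. Qed.

Lemma RInt_plus_R (f g : R -> R) a b : ex_RInt f a b -> ex_RInt g a b ->
  RInt (fun x => f x + g x) a b = RInt f a b + RInt g a b.
Proof. intros. apply (RInt_plus f g a b); auto. Qed.

Lemma RInt_scal_R (f : R -> R) a b c : ex_RInt f a b ->
  RInt (fun x => c * f x) a b = c * RInt f a b.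
Proof. intros. apply (RInt_scal f a b c); auto. Qed.

Lemma RInt_Chasles_R (f : R -> R) a b c : ex_RInt f a b -> ex_RInt f b c ->
  RInt f a b + RInt f b c = RInt f a c.
Proof. intros. apply (RInt_Chasles f a b c); auto. Qed.

Lemma RInt_lincomb5 (f1 f2 f3 f4 f5 : R -> R) c1 c2 c3 c4 c5 a b :
  continuity f1 -> continuity f2 -> continuity f3 -> continuity f4 -> continuity f5 ->
  RInt (fun u => c1 * f1 u + c2 * f2 u + c3 * f3 u + c4 * f4 u + c5 * f5 u) a b =
  c1 * RInt f1 a b + c2 * RInt f2 a b + c3 * RInt f3 a b + c4 * RInt f4 a b + c5 * RInt f5 a b.
Proof.
  intros H1 H2 H3 H4 H5.
  assert (Hs : forall c f, continuity f -> continuity (fun u => c * f u))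
    by (intros c f Hf; apply (continuity_scal f c Hf)).
  assert (Hp : forall f g, continuity f -> continuity g -> continuity (fun u => f u + g u))
    by (intros f g Hf Hg; apply (continuity_plus f g Hf Hg)).
  rewrite (RInt_plus_R (fun u => c1 * f1 u + c2 * f2 u + c3 * f3 u + c4 * f4 u) (fun u => c5 * f5 u)).
  rewrite (RInt_plus_R (fun u => c1 * f1 u + c2 * f2 u + c3 * f3 u) (fun u => c4 * f4 u)).
  rewrite (RInt_plus_R (fun u => c1 * f1 u + c2 * f2 u) (fun u => c3 * f3 u)).
  rewrite (RInt_plus_R (fun u => c1 * f1 u) (fun u => c2 * f2 u)).
  rewrite !RInt_scal_R. reflexivity.
  all: apply ex_RInt_continuity; repeat (apply Hp || apply Hs); auto.
Qed.

Lemma Rabs_RInt_le (f g : R -> R) a b : a <= b -> ex_RInt f a b -> ex_RInt g a b ->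
  (forall x, a < x < b -> Rabs (f x) <= g x) -> Rabs (RInt f a b) <= RInt g a b.
Proof.
  intros Hab Hf Hg H. eapply Rle_trans; [apply abs_RInt_le; auto|].
  apply RInt_le; auto. apply ex_RInt_norm; auto.
Qed.

Lemma RInt_inv_sqr a b : 0 < a <= b \/ a <= b < 0 -> RInt (fun x => / (x * x)) a b = / a - / b.
Proof.
  intros H.
  assert (Hx : forall x, Rmin a b <= x <= Rmax a b -> x <> 0).
  { intros x. rewrite Rmin_left, Rmax_right by lra. lra. }
  assert (Hd : forall x, Rmin a b <= x <= Rmax a b -> is_derive (fun x => - / x) x (/ (x * x))).
  { intros x Hab. specialize (Hx x Hab). auto_derive; auto. field; auto. }
  rewrite (is_RInt_unique _ _ _ _ (is_RInt_derive _ _ a b Hd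
    ltac:(intros x Hab; specialize (Hx x Hab); apply continuity_pt_filterlim,
          continuity_pt_ex_derive; auto_derive; auto))).
  unfold minus, plus, opp; simpl. ring.
Qed.

Lemma Rabs_RInt_le_inv_sqr (f : R -> R) c a b : 0 <= c -> 0 < a <= b \/ a <= b < 0 ->
  continuity f -> (forall x, a < x < b -> Rabs (f x) <= c * / (x * x)) ->
  Rabs (RInt f a b) <= c * (/ a - / b).
Proof.
  intros Hc Hab Hf H.
  assert (Hi : ex_RInt (fun x => / (x * x)) a b).
  { apply ex_RInt_continuity_pt. rewrite Rmin_left, Rmax_right by lra. intros x Hx.
    apply continuity_pt_ex_derive. auto_derive. apply Rmult_integral_contrapositive_currified; lra. }
  rewrite <- RInt_inv_sqr, <- RInt_scal_R by auto.
  apply Rabs_RInt_le; auto; [lra|apply ex_RInt_continuity; auto|].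
  apply ex_RInt_scal with (k := c) in Hi. exact Hi.
Qed.

Lemma RInt_odd_sym (f : R -> R) W : continuity f -> (forall x, f (- x) = - f x) ->
  RInt f (- W) W = 0.
Proof.
  intros Hc Ho.
  pose proof (RInt_comp_lin f (-1) 0 (- W) W (ex_RInt_continuity _ _ _ Hc)) as H.
  replace (-1 * - W + 0) with W in H by ring. replace (-1 * W + 0) with (- W) in H by ring.
  assert (H2 : RInt f (- W) W = RInt f W (- W)).
  { rewrite <- H. apply RInt_ext. intros x _. replace (-1 * x + 0) with (- x) by ring.
    rewrite Ho. unfold scal; simpl. unfold mult; simpl. ring. }
  pose proof (opp_RInt_swap f (- W) W (ex_RInt_continuity _ _ _ Hc)) as H3.
  rewrite <- H3 in H2. unfold opp in H2; simpl in H2. lra.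
Qed.

(** * The kernel *)

Definition sinc (x : R) : R := if Req_EM_T x 0 then 1 else sin x / x.

Lemma sinc_continuity : continuity sinc.
Proof.
  intros x. apply continuity_pt_removable.
  - intros Hx. apply continuity_pt_ex_derive. auto_derive. auto.
  - intros eps Heps. destruct (derivable_pt_lim_sin 0 eps Heps) as [d Hd].
    exists d. split; [apply cond_pos|]. intros y Hy1 Hy2.
    specialize (Hd y Hy1 Hy2). rewrite Rplus_0_l, sin_0, cos_0, Rminus_0_r in Hd. exact Hd.
Qed.

Lemma Rabs_sinc_le1 x : Rabs (sinc x) <= 1.
Proof.
  unfold sinc. destruct (Req_EM_T x 0) as [|Hx]; [rewrite Rabs_R1; lra|].
  unfold Rdiv. rewrite Rabs_mult, Rabs_inv. pose proof (Rabs_sin_le x).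
  pose proof (Rabs_pos_lt x Hx).
  apply (Rmult_le_reg_r (Rabs x)); auto. rewrite Rmult_assoc, Rinv_l by lra. lra.
Qed.

Lemma sinc_opp x : sinc (- x) = sinc x.
Proof.
  unfold sinc. destruct (Req_EM_T (- x) 0), (Req_EM_T x 0); try lra.
  rewrite sin_neg. field. auto.
Qed.

Lemma sinc_ge_half x : Rabs x <= 1 -> 1 / 2 <= sinc x.
Proof.
  intros H. apply Rabs_le_between in H.
  assert (Hpos : forall z, 0 <= z <= 1 -> 1 / 2 <= sinc z).
  { intros z Hz. unfold sinc. destruct (Req_EM_T z 0); [lra|].
    destruct (sin_bound z 0 ltac:(lra) ltac:(pose proof PI2_1; lra)) as [Hl _].
    unfold sin_approx, sin_term in Hl. simpl in Hl.
    assert (E : sin z / z * z = sin z) by (field; lra).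
    set (t := sin z / z) in *. nra. }
  destruct (Rle_dec 0 x).
  - apply Hpos. lra.
  - rewrite <- sinc_opp. apply Hpos. lra.
Qed.

(* The square of a Fejer kernel; its Fourier transform is supported in [-4/5, 4/5]. *)
Definition jackson (u : R) : R := sinc (u / 5) ^ 4.

Lemma jackson_continuity : continuity jackson.
Proof.
  apply (continuity_comp (fun u => sinc (u / 5)) (fun s => s ^ 4)).
  - apply (continuity_comp (fun u => u / 5) sinc); [|apply sinc_continuity].
    apply continuity_ex_derive. intros. auto_derive. auto.
  - apply continuity_ex_derive. intros. auto_derive. auto.
Qed.

Lemma jackson_ge0 u : 0 <= jackson u.
Proof. unfold jackson. replace (sinc (u / 5) ^ 4) with ((sinc (u / 5) ^ 2) ^ 2) by ring. apply pow2_ge_0. Qed.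

Lemma jackson_le1 u : jackson u <= 1.
Proof.
  unfold jackson. pose proof (Rabs_sinc_le1 (u / 5)) as H. apply Rabs_le_between in H.
  replace (sinc (u / 5) ^ 4) with ((sinc (u / 5) ^ 2) ^ 2) by ring.
  assert (0 <= sinc (u / 5) ^ 2 <= 1) by (simpl; nra). nra.
Qed.

Lemma jackson_opp u : jackson (- u) = jackson u.
Proof. unfold jackson. replace (- u / 5) with (- (u / 5)) by field. now rewrite sinc_opp. Qed.

Lemma jackson_eq u : u <> 0 -> jackson u = 625 * sin (u / 5) ^ 4 / u ^ 4.
Proof.
  intros Hu. unfold jackson, sinc. destruct (Req_EM_T (u / 5) 0); [exfalso; lra|].
  field. auto.
Qed.

Lemma jackson_mul_pow4_le u : u <> 0 -> jackson u * u ^ 4 <= 625.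
Proof.
  intros Hu. rewrite jackson_eq by auto. unfold Rdiv. rewrite Rmult_assoc, Rinv_l
    by (apply pow_nonzero; auto).
  pose proof (SIN_bound (u / 5)).
  replace (sin (u / 5) ^ 4) with ((sin (u / 5) ^ 2) ^ 2) by ring.
  assert (0 <= sin (u / 5) ^ 2 <= 1) by (simpl; nra). nra.
Qed.

Lemma jackson_ge u : Rabs u <= 1 -> 1 / 16 <= jackson u.
Proof.
  intros H. unfold jackson. assert (1 / 2 <= sinc (u / 5)).
  { apply sinc_ge_half. unfold Rdiv. rewrite Rabs_mult, Rabs_inv, (Rabs_pos_eq 5) by lra. lra. }
  replace (1 / 16) with ((1 / 2) ^ 4) by field. apply pow_incr. lra.
Qed.

Lemma sqr_mul_jackson_le u : u * u * jackson u <= 1250 / (1 + u * u).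
Proof.
  pose proof (jackson_ge0 u). pose proof (jackson_le1 u).
  apply (Rmult_le_reg_r (1 + u * u)); [nra|].
  replace (1250 / (1 + u * u) * (1 + u * u)) with 1250 by (field; nra).
  destruct (Rle_dec (u * u) 1).
  - assert (u * u * jackson u <= 1) by (assert (0 <= u * u) by nra; nra). nra.
  - assert (Hu : u <> 0) by (intros ->; lra).
    pose proof (jackson_mul_pow4_le u Hu). simpl in *. nra.
Qed.

Lemma Rabs_mul_jackson_le u : Rabs u * jackson u <= 1250 / (1 + u * u).
Proof.
  pose proof (jackson_ge0 u). pose proof (jackson_le1 u). pose proof (Rabs_pos u).
  assert (Hsq : Rabs u * Rabs u = u * u) by (rewrite <- Rabs_mult; apply Rabs_pos_eq; nra).
  destruct (Rle_dec (Rabs u) 1).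
  - apply (Rmult_le_reg_r (1 + u * u)); [nra|].
    replace (1250 / (1 + u * u) * (1 + u * u)) with 1250 by (field; nra).
    assert (Rabs u * jackson u <= 1) by nra. nra.
  - pose proof (sqr_mul_jackson_le u).
    assert (Rabs u * jackson u <= Rabs u * Rabs u * jackson u).
    { assert (0 <= Rabs u * jackson u) by nra. nra. }
    rewrite Hsq in *. lra.
Qed.

Lemma RInt_div_1_plus_sqr_le c W : 0 <= c -> 0 <= W ->
  RInt (fun u => c / (1 + u * u)) (- W) W <= 4 * c.
Proof.
  intros Hc HW.
  assert (Hd : forall x, Rmin (- W) W <= x <= Rmax (- W) W ->
                 is_derive (fun x => c * atan x) x (c / (1 + x * x))).
  { intros x _. auto_derive; auto. unfold Rsqr. field. nra. }
  rewrite (is_RInt_unique _ _ _ _ (is_RInt_derive _ _ (- W) W Hd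
    ltac:(intros x _; apply continuity_pt_filterlim, continuity_pt_ex_derive; auto_derive; nra))).
  unfold minus, plus, opp; simpl. rewrite atan_opp.
  pose proof (atan_bound W). pose proof PI_4. nra.
Qed.

(** * Decay of the truncated Fourier transform of the kernel *)

Lemma INR_fact_IZR n z : Z.of_nat (Factorial.fact n) = z -> INR (Factorial.fact n) = IZR z.
Proof. intros H. rewrite INR_IZR_INZ, H. reflexivity. Qed.

Lemma cos_approx_3_eq x : cos_approx x 3 = 1 - x ^ 2 / 2 + x ^ 4 / 24 - x ^ 6 / 720.
Proof.
  unfold cos_approx. simpl sum_f_R0. unfold cos_term.
  rewrite (INR_fact_IZR (2 * 3) 720), (INR_fact_IZR (2 * 2) 24), (INR_fact_IZR (2 * 1) 2),
    (INR_fact_IZR (2 * 0) 1) by (vm_compute; reflexivity).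
  simpl pow. field.
Qed.

Lemma cos_approx_4_eq x :
  cos_approx x 4 = 1 - x ^ 2 / 2 + x ^ 4 / 24 - x ^ 6 / 720 + x ^ 8 / 40320.
Proof.
  unfold cos_approx. simpl sum_f_R0. unfold cos_term.
  rewrite (INR_fact_IZR (2 * 4) 40320), (INR_fact_IZR (2 * 3) 720), (INR_fact_IZR (2 * 2) 24),
    (INR_fact_IZR (2 * 1) 2), (INR_fact_IZR (2 * 0) 1) by (vm_compute; reflexivity).
  simpl pow. field.
Qed.

Definition cos_rem (x : R) : R :=
  if Req_EM_T x 0 then / 24 else (cos x - 1 + x ^ 2 / 2) / x ^ 4.

Lemma cos_rem_continuity : continuity cos_rem.
Proof.
  intros x. apply continuity_pt_removable.
  - intros Hx. apply continuity_pt_ex_derive. auto_derive.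
    repeat apply Rmult_integral_contrapositive_currified; auto; lra.
  - intros eps Heps. exists (Rmin 1 eps). split; [apply Rmin_glb_lt; lra|].
    intros y Hy Hy2. pose proof (Rmin_l 1 eps). pose proof (Rmin_r 1 eps).
    assert (Hyy : 0 < y * y <= 1 /\ y * y < eps).
    { assert (Rabs y * Rabs y < Rmin 1 eps) by (pose proof (Rabs_pos y); nra).
      rewrite <- Rabs_mult, Rabs_pos_eq in H1 by nra.
      assert (0 < y * y) by (apply Rsqr_pos_lt; auto). split; [split|]; lra. }
    assert (Hb : - PI / 2 <= y <= PI / 2).
    { assert (Rabs y <= PI / 2) by (pose proof PI2_1; lra). apply Rabs_le_between in H1. lra. }
    destruct (cos_bound y 1 (proj1 Hb) (proj2 Hb)) as [Hl Hu]. simpl in Hl, Hu.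
    rewrite cos_approx_3_eq in Hl. rewrite cos_approx_4_eq in Hu.
    assert (Hy4 : 0 < y ^ 4) by (replace (y ^ 4) with ((y * y) * (y * y)) by ring; nra).
    replace ((cos y - 1 + y ^ 2 / 2) / y ^ 4 - / 24)
      with ((cos y - 1 + y ^ 2 / 2 - y ^ 4 / 24) / y ^ 4) by (field; lra).
    unfold Rdiv. rewrite Rabs_mult, Rabs_inv, (Rabs_pos_eq (y ^ 4)) by lra.
    assert (Rabs (cos y - 1 + y ^ 2 / 2 - y ^ 4 / 24) <= y ^ 4 * (y * y)).
    { apply Rabs_le.
      replace (y ^ 6) with (y ^ 4 * (y * y)) in * by ring.
      replace (y ^ 8) with (y ^ 4 * (y * y) * (y * y)) in * by ring.
      split; nra. }
    apply Rle_lt_trans with (y ^ 4 * (y * y) * / y ^ 4).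
    + apply Rmult_le_compat_r; auto. left; apply Rinv_0_lt_compat; auto.
    + replace (y ^ 4 * (y * y) * / y ^ 4) with (y * y) by (field; lra). lra.
Qed.

Lemma Rabs_cos_rem_le x : 2 <= Rabs x -> Rabs (cos_rem x) <= / (x * x).
Proof.
  intros H. unfold cos_rem. destruct (Req_EM_T x 0) as [->|Hx]; [rewrite Rabs_R0 in H; lra|].
  assert (x * x = Rabs x * Rabs x) by (rewrite <- Rabs_mult, Rabs_pos_eq; nra).
  assert (4 <= x * x) by nra.
  assert (Hx4 : 0 < x ^ 4) by (replace (x ^ 4) with ((x * x) * (x * x)) by ring; nra).
  unfold Rdiv. rewrite Rabs_mult, Rabs_inv, (Rabs_pos_eq (x ^ 4)) by lra.
  pose proof (COS_bound x).
  assert (Rabs (cos x - 1 + x ^ 2 / 2) <= x * x) by (apply Rabs_le; simpl; split; nra).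
  apply Rle_trans with (x * x * / x ^ 4).
  - apply Rmult_le_compat_r; auto. left; apply Rinv_0_lt_compat; auto.
  - right. field. lra.
Qed.

Lemma cos_rem_scale_eq b u : u <> 0 ->
  b ^ 4 * cos_rem (b * u) = (cos (b * u) - 1 + b ^ 2 * u ^ 2 / 2) / u ^ 4.
Proof.
  intros Hu. unfold cos_rem. destruct (Req_EM_T (b * u) 0) as [E|E].
  - apply Rmult_integral in E. destruct E as [->|]; [|tauto].
    rewrite Rmult_0_l, cos_0. field. auto.
  - field. split; auto. intros ->. apply E. ring.
Qed.

Lemma continuity_cos_rem_scale b : continuity (fun u => b ^ 4 * cos_rem (b * u)).
Proof.
  apply (continuity_scal (fun u => cos_rem (b * u))).
  apply (continuity_comp (fun u => b * u) cos_rem); [|apply cos_rem_continuity].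
  apply continuity_ex_derive. intros. auto_derive. auto.
Qed.

Lemma sin_pow4_mul_cos u e :
  sin (u / 5) ^ 4 * cos (e * u) =
  3 / 8 * cos (e * u) - 1 / 4 * cos ((e + 2 / 5) * u) - 1 / 4 * cos ((e - 2 / 5) * u)
  + 1 / 16 * cos ((e + 4 / 5) * u) + 1 / 16 * cos ((e - 4 / 5) * u).
Proof.
  set (a := u / 5). set (y := e * u).
  replace ((e + 2 / 5) * u) with (y + 2 * a) by (unfold a, y; field).
  replace ((e - 2 / 5) * u) with (y - 2 * a) by (unfold a, y; field).
  replace ((e + 4 / 5) * u) with (y + 2 * (2 * a)) by (unfold a, y; field).
  replace ((e - 4 / 5) * u) with (y - 2 * (2 * a)) by (unfold a, y; field).
  rewrite !cos_plus, !cos_minus, (cos_2a_cos (2 * a)).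
  replace (sin a ^ 4) with ((sin a * sin a) ^ 2) by ring.
  replace (sin a * sin a) with ((1 - cos (2 * a)) / 2) by (rewrite cos_2a_sin; field).
  clearbody a y. field.
Qed.

(* The weights 3/8, -1/4, -1/4, 1/16, 1/16 of sin^4 have vanishing moments of order 0, 2
   and 3 against the frequencies e, e +- 2/5, e +- 4/5; the first two make the
   Taylor polynomials of cos cancel, the last one is used in
   [Rabs_jackson_cos_int_le_large]. *)
Lemma jackson_mul_cos_eq e u :
  jackson u * cos (e * u) =
  625 * 3 / 8 * (e ^ 4 * cos_rem (e * u))
  + (-625 / 4) * ((e + 2 / 5) ^ 4 * cos_rem ((e + 2 / 5) * u))
  + (-625 / 4) * ((e - 2 / 5) ^ 4 * cos_rem ((e - 2 / 5) * u))
  + 625 / 16 * ((e + 4 / 5) ^ 4 * cos_rem ((e + 4 / 5) * u))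
  + 625 / 16 * ((e - 4 / 5) ^ 4 * cos_rem ((e - 4 / 5) * u)).
Proof.
  destruct (Req_dec u 0) as [->|Hu].
  - rewrite !Rmult_0_r. unfold jackson, cos_rem, sinc.
    destruct (Req_EM_T 0 0); [|lra].
    destruct (Req_EM_T (0 / 5) 0) as [_|n]; [|exfalso; apply n; field].
    rewrite cos_0. field.
  - rewrite !cos_rem_scale_eq, jackson_eq by auto.
    replace (625 * sin (u / 5) ^ 4 / u ^ 4 * cos (e * u))
      with (625 / u ^ 4 * (sin (u / 5) ^ 4 * cos (e * u))) by (field; auto).
    rewrite sin_pow4_mul_cos. field. auto.
Qed.

Definition cos_rem_int (Y : R) : R := RInt cos_rem (- Y) Y.

Definition jackson_cos_int (e W : R) : R := RInt (fun u => jackson u * cos (e * u)) (- W) W.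

Lemma RInt_cos_rem_scale b W :
  RInt (fun u => b ^ 4 * cos_rem (b * u)) (- W) W = b ^ 3 * cos_rem_int (b * W).
Proof.
  assert (Hc : forall v, continuity (fun u => cos_rem (b * u + v))).
  { intros v. apply (continuity_comp (fun u => b * u + v) cos_rem); [|apply cos_rem_continuity].
    apply continuity_ex_derive. intros. auto_derive. auto. }
  rewrite (RInt_ext_R _ (fun u => b ^ 3 * (b * cos_rem (b * u + 0))))
    by (intros; rewrite Rplus_0_r; ring).
  rewrite RInt_scal_R; [|apply ex_RInt_continuity, (continuity_scal _ b (Hc 0))].
  f_equal. unfold cos_rem_int.
  pose proof (RInt_comp_lin cos_rem b 0 (- W) W) as H.
  rewrite !Rplus_0_r in H. replace (b * - W) with (- (b * W)) in H by ring.
  rewrite <- H by (apply ex_RInt_continuity, cos_rem_continuity).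
  apply RInt_ext. intros. rewrite Rplus_0_r. reflexivity.
Qed.

Lemma jackson_cos_int_eq e W :
  jackson_cos_int e W =
  625 * 3 / 8 * (e ^ 3 * cos_rem_int (e * W))
  + (-625 / 4) * ((e + 2 / 5) ^ 3 * cos_rem_int ((e + 2 / 5) * W))
  + (-625 / 4) * ((e - 2 / 5) ^ 3 * cos_rem_int ((e - 2 / 5) * W))
  + 625 / 16 * ((e + 4 / 5) ^ 3 * cos_rem_int ((e + 4 / 5) * W))
  + 625 / 16 * ((e - 4 / 5) ^ 3 * cos_rem_int ((e - 4 / 5) * W)).
Proof.
  unfold jackson_cos_int. rewrite (RInt_ext _ _ _ _ (fun u _ => jackson_mul_cos_eq e u)).
  rewrite RInt_lincomb5 by apply continuity_cos_rem_scale.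
  rewrite !RInt_cos_rem_scale. reflexivity.
Qed.

Lemma cos_rem_int_diff_le Y0 Y1 Y2 : 2 <= Y0 -> Y0 <= Y1 -> Y0 <= Y2 ->
  Rabs (cos_rem_int Y1 - cos_rem_int Y2) <= 2 / Y0.
Proof.
  assert (Hord : forall Y1 Y2, 2 <= Y0 -> Y0 <= Y2 <= Y1 ->
            Rabs (cos_rem_int Y1 - cos_rem_int Y2) <= 2 / Y0).
  { clear Y1 Y2. intros Y1 Y2 H0 H12. unfold cos_rem_int.
    assert (E : forall a b, ex_RInt cos_rem a b)
      by (intros; apply ex_RInt_continuity, cos_rem_continuity).
    rewrite <- (RInt_Chasles_R cos_rem (- Y1) (- Y2) Y1),
      <- (RInt_Chasles_R cos_rem (- Y2) Y2 Y1) by auto.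
    assert (A1 : Rabs (RInt cos_rem (- Y1) (- Y2)) <= 1 * (/ (- Y1) - / (- Y2))).
    { apply Rabs_RInt_le_inv_sqr; try lra; [apply cos_rem_continuity|].
      intros x Hx. rewrite Rmult_1_l. apply Rabs_cos_rem_le. rewrite Rabs_left by lra. lra. }
    assert (A2 : Rabs (RInt cos_rem Y2 Y1) <= 1 * (/ Y2 - / Y1)).
    { apply Rabs_RInt_le_inv_sqr; try lra; [apply cos_rem_continuity|].
      intros x Hx. rewrite Rmult_1_l. apply Rabs_cos_rem_le. rewrite Rabs_pos_eq by lra. lra. }
    rewrite !Rinv_opp in A1.
    assert (/ Y1 > 0) by (apply Rinv_0_lt_compat; lra).
    assert (/ Y2 <= / Y0) by (apply Rinv_le_contravar; lra).
    apply Rabs_le_between in A1, A2. apply Rabs_le. unfold Rdiv. lra. }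
  intros H0 H1 H2. destruct (Rle_dec Y2 Y1).
  - apply Hord; lra.
  - rewrite Rabs_minus_sym. apply Hord; lra.
Qed.

Lemma Rabs_jackson_cos_int_le_large e W : 1 <= e -> 10 <= W ->
  Rabs (jackson_cos_int e W) <= 6250 * (e + 1) ^ 3 / W.
Proof.
  intros He HW. rewrite jackson_cos_int_eq.
  set (P0 := cos_rem_int (e * W)).
  assert (HD : forall b, 1 / 5 <= b <= e + 1 ->
            Rabs (b ^ 3 * (cos_rem_int (b * W) - P0)) <= (e + 1) ^ 3 * (2 / (W / 5))).
  { intros b Hb. apply Rabs_mul_le.
    - apply cos_rem_int_diff_le; nra.
    - split; [apply pow_le; lra|apply pow_incr; lra]. }
  pose proof (HD (e + 2 / 5) ltac:(lra)) as D1. pose proof (HD (e - 2 / 5) ltac:(lra)) as D2.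
  pose proof (HD (e + 4 / 5) ltac:(lra)) as D3. pose proof (HD (e - 4 / 5) ltac:(lra)) as D4.
  apply Rabs_le_between in D1, D2, D3, D4.
  set (P1 := cos_rem_int ((e + 2 / 5) * W)) in *. set (P2 := cos_rem_int ((e - 2 / 5) * W)) in *.
  set (P3 := cos_rem_int ((e + 4 / 5) * W)) in *. set (P4 := cos_rem_int ((e - 4 / 5) * W)) in *.
  clearbody P0 P1 P2 P3 P4.
  replace (625 * 3 / 8 * (e ^ 3 * P0) + -625 / 4 * ((e + 2 / 5) ^ 3 * P1)
           + -625 / 4 * ((e - 2 / 5) ^ 3 * P2) + 625 / 16 * ((e + 4 / 5) ^ 3 * P3)
           + 625 / 16 * ((e - 4 / 5) ^ 3 * P4))
    with (-625 / 4 * ((e + 2 / 5) ^ 3 * (P1 - P0)) + -625 / 4 * ((e - 2 / 5) ^ 3 * (P2 - P0))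
          + 625 / 16 * ((e + 4 / 5) ^ 3 * (P3 - P0)) + 625 / 16 * ((e - 4 / 5) ^ 3 * (P4 - P0)))
    by field.
  replace (6250 * (e + 1) ^ 3 / W) with (625 * ((e + 1) ^ 3 * (2 / (W / 5)))) by (field; lra).
  set (Z := (e + 1) ^ 3 * (2 / (W / 5))) in *.
  apply Rabs_le. lra.
Qed.

Lemma continuity_jackson_mul_cos e : continuity (fun u => jackson u * cos (e * u)).
Proof.
  apply (continuity_mult jackson (fun u => cos (e * u))); [apply jackson_continuity|].
  apply continuity_ex_derive. intros. auto_derive. auto.
Qed.

Lemma continuity_jackson_mul_sin e : continuity (fun u => jackson u * sin (e * u)).
Proof.
  apply (continuity_mult jackson (fun u => sin (e * u))); [apply jackson_continuity|].
  apply continuity_ex_derive. intros. auto_derive. auto.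
Qed.

Lemma Rabs_jackson_mul_cos_le e x : 1 <= Rabs x -> Rabs (jackson x * cos (e * x)) <= 625 * / (x * x).
Proof.
  intros Hx. assert (Hx0 : x <> 0) by (intros ->; rewrite Rabs_R0 in Hx; lra).
  pose proof (jackson_mul_pow4_le x Hx0). pose proof (jackson_ge0 x).
  assert (x * x = Rabs x * Rabs x) by (rewrite <- Rabs_mult, Rabs_pos_eq; nra).
  assert (1 <= x * x) by nra.
  assert (Hk : jackson x * (x * x) <= 625).
  { replace (x ^ 4) with ((x * x) * (x * x)) in H by ring.
    assert (0 <= jackson x * (x * x)) by nra. nra. }
  rewrite Rabs_mult, (Rabs_pos_eq (jackson x)) by auto.
  assert (Rabs (cos (e * x)) <= 1) by (apply Rabs_le, COS_bound).
  apply Rle_trans with (jackson x * 1); [apply Rmult_le_compat_l; auto|].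
  apply (Rmult_le_reg_r (x * x)); [lra|].
  replace (625 * / (x * x) * (x * x)) with 625 by (field; lra). lra.
Qed.

(* For large W' the truncation at W' is O(1/W) away from the truncation at W, and
   it is O(1/W') by [Rabs_jackson_cos_int_le_large]; letting W' grow gives O(1/W). *)
Lemma Rabs_jackson_cos_int_le_pos e W : 1 <= e -> 1 <= W ->
  Rabs (jackson_cos_int e W) <= 1250 / W.
Proof.
  intros He HW.
  set (f := fun u => jackson u * cos (e * u)).
  assert (Hkey : forall W', Rmax W 10 <= W' ->
            Rabs (jackson_cos_int e W) <= 1250 / W + 6250 * (e + 1) ^ 3 / W').
  { intros W' HW'. pose proof (Rmax_l W 10). pose proof (Rmax_r W 10).
    assert (E : forall a b, ex_RInt f a b)
      by (intros; apply ex_RInt_continuity, continuity_jackson_mul_cos).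
    assert (Hs : jackson_cos_int e W' = RInt f (- W') (- W) + jackson_cos_int e W + RInt f W W').
    { unfold jackson_cos_int. fold f. rewrite !RInt_Chasles_R by auto. reflexivity. }
    assert (A1 : Rabs (RInt f (- W') (- W)) <= 625 * (/ (- W') - / (- W))).
    { apply Rabs_RInt_le_inv_sqr; try lra; [apply continuity_jackson_mul_cos|].
      intros x Hx. apply Rabs_jackson_mul_cos_le. rewrite Rabs_left by lra. lra. }
    assert (A2 : Rabs (RInt f W W') <= 625 * (/ W - / W')).
    { apply Rabs_RInt_le_inv_sqr; try lra; [apply continuity_jackson_mul_cos|].
      intros x Hx. apply Rabs_jackson_mul_cos_le. rewrite Rabs_pos_eq by lra. lra. }
    rewrite !Rinv_opp in A1.
    pose proof (Rabs_jackson_cos_int_le_large e W' He ltac:(lra)) as A3.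
    assert (/ W' > 0) by (apply Rinv_0_lt_compat; lra).
    apply Rabs_le_between in A1, A2, A3. apply Rabs_le. unfold Rdiv in *. lra. }
  assert (Hp : 0 <= 6250 * (e + 1) ^ 3) by (apply Rmult_le_pos; [lra|apply pow_le; lra]).
  assert (H10 : 0 < Rmax W 10) by (pose proof (Rmax_r W 10); lra).
  apply Rabs_le. split.
  - cut (- jackson_cos_int e W <= 1250 / W); [lra|].
    apply (le_of_le_add_div _ _ _ _ Hp H10). intros W' HW'.
    specialize (Hkey W' HW'). apply Rabs_le_between in Hkey. unfold Rdiv in *. lra.
  - apply (le_of_le_add_div _ _ _ _ Hp H10). intros W' HW'.
    specialize (Hkey W' HW'). apply Rabs_le_between in Hkey. unfold Rdiv in *. lra.
Qed.

Lemma Rabs_jackson_cos_int_le e W : 1 <= Rabs e -> 1 <= W ->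
  Rabs (jackson_cos_int e W) <= 1250 / W.
Proof.
  intros He HW. destruct (Rle_dec 0 e).
  - rewrite Rabs_pos_eq in He by lra. apply Rabs_jackson_cos_int_le_pos; auto.
  - rewrite Rabs_left in He by lra.
    replace (jackson_cos_int e W) with (jackson_cos_int (- e) W).
    + apply Rabs_jackson_cos_int_le_pos; auto.
    + apply RInt_ext_R. intros x _. replace (- e * x) with (- (e * x)) by ring.
      now rewrite cos_neg.
Qed.

Lemma RInt_jackson_mul_sin e W : RInt (fun u => jackson u * sin (e * u)) (- W) W = 0.
Proof.
  apply RInt_odd_sym; [apply continuity_jackson_mul_sin|].
  intros x. rewrite jackson_opp. replace (e * - x) with (- (e * x)) by ring.
  rewrite sin_neg. ring.
Qed.

Lemma jackson_cos_int_0_ge W : 1 <= W -> 1 / 8 <= jackson_cos_int 0 W.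
Proof.
  intros HW. unfold jackson_cos_int.
  rewrite (RInt_ext_R _ jackson) by (intros; rewrite Rmult_0_l, cos_0; ring).
  assert (E : forall a b, ex_RInt jackson a b)
    by (intros; apply ex_RInt_continuity, jackson_continuity).
  rewrite <- (RInt_Chasles_R _ (- W) (-1) W), <- (RInt_Chasles_R _ (-1) 1 W) by auto.
  assert (0 <= RInt jackson (- W) (-1)) by (apply RInt_ge_0; auto; [lra|intros; apply jackson_ge0]).
  assert (0 <= RInt jackson 1 W) by (apply RInt_ge_0; auto; intros; apply jackson_ge0).
  assert (RInt (fun _ => 1 / 16) (-1) 1 <= RInt jackson (-1) 1).
  { apply RInt_le; auto; [lra|apply ex_RInt_const|].
    intros x Hx. apply jackson_ge. apply Rabs_le. lra. }
  rewrite RInt_const in H1. unfold scal in H1; simpl in H1. unfold mult in H1; simpl in H1. lra.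
Qed.

(** * Almost orthogonality of trigonometric waves against the kernel *)

Definition cos_sin_comb (a b mu u : R) : R := a * cos (mu * u) + b * sin (mu * u).

Lemma continuity_cos_sin_comb a b mu : continuity (cos_sin_comb a b mu).
Proof. apply continuity_ex_derive. intros. unfold cos_sin_comb. auto_derive. auto. Qed.

Definition jackson_pair_int (a b mu c d nu W : R) : R :=
  RInt (fun u => jackson u * (cos_sin_comb a b mu u * cos_sin_comb c d nu u)) (- W) W.

Lemma jackson_pair_int_eq a b mu c d nu W :
  jackson_pair_int a b mu c d nu W =
  (a * c + b * d) / 2 * jackson_cos_int (mu - nu) W + (a * c - b * d) / 2 * jackson_cos_int (mu + nu) W.
Proof.
  unfold jackson_pair_int, jackson_cos_int, cos_sin_comb.
  rewrite (RInt_ext_R _ (fun u =>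
      (a * c + b * d) / 2 * (jackson u * cos ((mu - nu) * u))
    + (a * c - b * d) / 2 * (jackson u * cos ((mu + nu) * u))
    + (b * c - a * d) / 2 * (jackson u * sin ((mu - nu) * u))
    + (a * d + b * c) / 2 * (jackson u * sin ((mu + nu) * u)) + 0 * 0)).
  2: { intros x _. replace ((mu - nu) * x) with (mu * x - nu * x) by ring.
       replace ((mu + nu) * x) with (mu * x + nu * x) by ring.
       rewrite cos_minus, cos_plus, sin_minus, sin_plus. field. }
  rewrite (RInt_lincomb5 _ _ _ _ (fun _ => 0)); try apply continuity_jackson_mul_cos;
    try apply continuity_jackson_mul_sin; [|apply continuity_const; intros ? ?; reflexivity].
  rewrite !RInt_jackson_mul_sin. ring.
Qed.

Lemma Rabs_jackson_pair_int_le a b mu c d nu W p q :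
  0 <= p -> 0 <= q -> a * a + b * b <= p * p -> c * c + d * d <= q * q ->
  1 <= Rabs (mu - nu) -> 1 <= Rabs (mu + nu) -> 1 <= W ->
  Rabs (jackson_pair_int a b mu c d nu W) <= p * q * (1250 / W).
Proof.
  intros Hp Hq Hab Hcd H1 H2 HW. rewrite jackson_pair_int_eq.
  pose proof (Rabs_jackson_cos_int_le _ _ H1 HW) as I1.
  pose proof (Rabs_jackson_cos_int_le _ _ H2 HW) as I2.
  assert ((a * a + b * b) * (c * c + d * d) <= (p * p) * (q * q)) by (apply Rmult_le_compat; nra).
  assert (A1 : Rabs (a * c + b * d) <= p * q).
  { apply Rabs_le_of_sqr_le; [nra|]. pose proof (sqr_dot2_le a b c d). nra. }
  assert (A2 : Rabs (a * c - b * d) <= p * q).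
  { apply Rabs_le_of_sqr_le; [nra|]. pose proof (sqr_dot2_le a (- b) c d). nra. }
  pose proof (Rabs_mul_le _ _ _ _ I1 (conj (Rabs_pos (a * c + b * d)) A1)) as B1.
  pose proof (Rabs_mul_le _ _ _ _ I2 (conj (Rabs_pos (a * c - b * d)) A2)) as B2.
  rewrite Rabs_mult, Rabs_Rabsolu, <- Rabs_mult in B1, B2.
  apply Rabs_le_between in B1, B2. apply Rabs_le.
  set (T := 1250 / W) in *. set (X := jackson_cos_int (mu - nu) W) in *.
  set (Y := jackson_cos_int (mu + nu) W) in *. clearbody T X Y.
  split; lra.
Qed.

Lemma jackson_pair_int_diag_ge a b mu W : 1 <= Rabs (2 * mu) -> 1 <= W ->
  (a * a + b * b) / 2 * (jackson_cos_int 0 W - 1250 / W) <= jackson_pair_int a b mu a b mu W.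
Proof.
  intros H HW. rewrite jackson_pair_int_eq.
  replace (mu - mu) with 0 by ring. replace (mu + mu) with (2 * mu) by ring.
  pose proof (Rabs_jackson_cos_int_le _ _ H HW) as I2. apply Rabs_le_between in I2.
  set (T := 1250 / W) in *. set (X := jackson_cos_int 0 W) in *.
  set (Y := jackson_cos_int (2 * mu) W) in *. clearbody T X Y.
  assert (0 <= a * a) by nra. assert (0 <= b * b) by nra. nra.
Qed.

Lemma cos_sin_comb_shift a b mu t0 s r :
  cos_sin_comb a b mu (t0 + s * r) =
  cos_sin_comb (cos_sin_comb a b mu t0) (cos_sin_comb b (- a) mu t0) (r * mu) s.
Proof.
  unfold cos_sin_comb. replace (mu * (t0 + s * r)) with (mu * t0 + r * mu * s) by ring.
  rewrite cos_plus, sin_plus. ring.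
Qed.

Lemma cos_sin_comb_shift_norm a b mu t0 :
  cos_sin_comb a b mu t0 * cos_sin_comb a b mu t0
  + cos_sin_comb b (- a) mu t0 * cos_sin_comb b (- a) mu t0 = a * a + b * b.
Proof.
  unfold cos_sin_comb. pose proof (sin2_cos2 (mu * t0)). unfold Rsqr in *.
  transitivity ((a * a + b * b) * (sin (mu * t0) * sin (mu * t0) + cos (mu * t0) * cos (mu * t0)));
    [ring|]. rewrite H. ring.
Qed.

Lemma Rabs_sum_f_R0_diff_le (u v : nat -> R) N M : (forall n, Rabs (u n) <= v n) -> (N <= M)%nat ->
  Rabs (sum_f_R0 u M - sum_f_R0 u N) <= sum_f_R0 v M - sum_f_R0 v N.
Proof.
  intros H HNM. induction HNM as [|M HNM IH].
  - rewrite !Rminus_diag, Rabs_R0. lra.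
  - simpl. specialize (H (S M)).
    replace (sum_f_R0 u M + u (S M) - sum_f_R0 u N) with ((sum_f_R0 u M - sum_f_R0 u N) + u (S M))
      by ring.
    eapply Rle_trans; [apply Rabs_triang|]. lra.
Qed.

Lemma Rabs_infinite_sum_tail_le (u v : nat -> R) U V N : (forall n, Rabs (u n) <= v n) ->
  infinite_sum u U -> infinite_sum v V -> Rabs (U - sum_f_R0 u N) <= V - sum_f_R0 v N.
Proof.
  intros H HU HV.
  destruct (Rle_dec (Rabs (U - sum_f_R0 u N)) (V - sum_f_R0 v N)) as [|Hgt]; auto. exfalso.
  set (eps := (Rabs (U - sum_f_R0 u N) - (V - sum_f_R0 v N)) / 2).
  assert (He : eps > 0) by (unfold eps; lra).
  destruct (HU eps He) as [N1 H1]. destruct (HV eps He) as [N2 H2].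
  set (M := max N (max N1 N2)).
  specialize (H1 M ltac:(unfold M; lia)). specialize (H2 M ltac:(unfold M; lia)).
  unfold Rdist in H1, H2.
  pose proof (Rabs_sum_f_R0_diff_le u v N M H ltac:(unfold M; lia)).
  assert (Rabs (U - sum_f_R0 u N) <= Rabs (sum_f_R0 u M - U) + Rabs (sum_f_R0 u M - sum_f_R0 u N)).
  { replace (U - sum_f_R0 u N) with (- (sum_f_R0 u M - U) + (sum_f_R0 u M - sum_f_R0 u N)) by ring.
    eapply Rle_trans; [apply Rabs_triang|]. rewrite Rabs_Ropp. lra. }
  apply Rabs_def2 in H2. unfold eps in *. lra.
Qed.

Lemma sum_f_R0_le_infinite_sum (v : nat -> R) V N :
  (forall n, 0 <= v n) -> infinite_sum v V -> sum_f_R0 v N <= V.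
Proof.
  intros H HV.
  pose proof (Rabs_infinite_sum_tail_le v v V V N ltac:(intros; rewrite Rabs_pos_eq; auto; lra) HV HV).
  pose proof (Rabs_pos (V - sum_f_R0 v N)). lra.
Qed.

Lemma infinite_sum_tail_lt (v : nat -> R) V eps : infinite_sum v V -> 0 < eps ->
  exists N0, forall N, (N0 <= N)%nat -> V - sum_f_R0 v N < eps.
Proof.
  intros HV He. destruct (HV eps He) as [N0 H]. exists N0. intros N HN.
  specialize (H N HN). unfold Rdist in H. apply Rabs_def2 in H. lra.
Qed.

Lemma infinite_sum_terms_lt (v : nat -> R) V eps : infinite_sum v V -> 0 < eps ->
  exists N0, forall N, (N0 <= N)%nat -> Rabs (v (S N)) < eps.
Proof.
  intros HV He. destruct (HV (eps / 2) ltac:(lra)) as [N0 H]. exists N0. intros N HN.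
  pose proof (H N HN) as H1. pose proof (H (S N) ltac:(lia)) as H2. unfold Rdist in *. simpl in H2.
  apply Rabs_def2 in H1, H2. apply Rabs_def1; lra.
Qed.

Lemma continuity_sum_f_R0 (f : nat -> R -> R) N :
  (forall k, continuity (f k)) -> continuity (fun u => sum_f_R0 (fun k => f k u) N).
Proof.
  intros Hc. induction N as [|N IH]; simpl; [apply Hc|].
  apply (continuity_plus (fun u => sum_f_R0 (fun k => f k u) N) (f (S N))); auto.
Qed.

Lemma RInt_sum_f_R0 (f : nat -> R -> R) a b N : (forall k, continuity (f k)) ->
  RInt (fun u => sum_f_R0 (fun k => f k u) N) a b = sum_f_R0 (fun k => RInt (f k) a b) N.
Proof.
  intros Hc. induction N as [|N IH]; simpl; [reflexivity|].
  rewrite <- IH. apply RInt_plus_R; apply ex_RInt_continuity; auto.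
  now apply continuity_sum_f_R0.
Qed.

Lemma M_test_continuity (f : nat -> R -> R) (M : nat -> R) Msum (F : R -> R) :
  (forall k, continuity (f k)) -> (forall k t, Rabs (f k t) <= M k) -> infinite_sum M Msum ->
  (forall t, infinite_sum (fun k => f k t) (F t)) -> continuity F.
Proof.
  intros Hc HM HS HF t.
  assert (Hr : 0 < 1) by lra.
  apply (CVU_continuity (fun N t => sum_f_R0 (fun k => f k t) N) F t (mkposreal 1 Hr)).
  - intros eps He. destruct (infinite_sum_tail_lt M Msum eps HS He) as [N0 H0]. exists N0.
    intros N z HN _. eapply Rle_lt_trans; [|apply (H0 N HN)].
    apply (Rabs_infinite_sum_tail_le (fun k => f k z)); auto.
  - intros N y _. apply continuity_sum_f_R0; auto.
  - unfold Boule. simpl. rewrite Rminus_diag, Rabs_R0. lra.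
Qed.

Lemma sum_f_R0_ge_single (q b : nat -> R) n A N :
  (forall k, k <> n -> Rabs (q k) <= b k) -> (forall k, 0 <= b k) -> A <= q n -> (n <= N)%nat ->
  A - sum_f_R0 b N <= sum_f_R0 q N.
Proof.
  intros Hq Hb HA HnN.
  assert (Hother : forall k, k <> n -> - b k <= q k)
    by (intros k Hk; specialize (Hq k Hk); apply Rabs_le_between in Hq; lra).
  assert (Hgen : forall K, ((K < n)%nat -> - sum_f_R0 b K <= sum_f_R0 q K) /\
                           ((n <= K)%nat -> A - sum_f_R0 b K <= sum_f_R0 q K)).
  { intros K. induction K as [|N0 [I1 I2]]; simpl; split; intros HN.
    - pose proof (Hother 0%nat ltac:(lia)). lra.
    - assert (n = 0%nat) by lia. subst. pose proof (Hb 0%nat). lra.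
    - pose proof (Hother (S N0) ltac:(lia)). specialize (I1 ltac:(lia)). lra.
    - destruct (Nat.eq_dec n (S N0)) as [->|Hn].
      + specialize (I1 ltac:(lia)). pose proof (Hb (S N0)). lra.
      + specialize (I2 ltac:(lia)). pose proof (Hother (S N0) ltac:(lia)). lra. }
  now apply Hgen.
Qed.

Lemma le_of_le_add_infinite_sum_tail (v : nat -> R) V a b c n :
  infinite_sum v V -> 0 <= c ->
  (forall N, (n <= N)%nat -> a <= b + c * (V - sum_f_R0 v N)) -> a <= b.
Proof.
  intros HV Hc H. destruct (Rle_dec a b) as [|Hab]; auto. exfalso.
  destruct (infinite_sum_tail_lt v V ((a - b) / (c + 1)) HV) as [N0 HN0].
  { apply Rdiv_lt_0_compat; lra. }
  set (N := max n N0). specialize (H N ltac:(unfold N; lia)).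
  specialize (HN0 N ltac:(unfold N; lia)).
  assert (c * (V - sum_f_R0 v N) <= c * ((a - b) / (c + 1))) by (apply Rmult_le_compat_l; lra).
  assert (c * ((a - b) / (c + 1)) < a - b).
  { apply (Rmult_lt_reg_r (c + 1)); [lra|].
    replace (c * ((a - b) / (c + 1)) * (c + 1)) with (c * (a - b)) by (field; lra). nra. }
  lra.
Qed.

(** * Testing a differentiable function against the kernel *)

(* The wave [F t0 * cos s + L * sin s] has the value and the slope of [F (t0 + s)] at
   [s = 0]; this remainder is therefore [o(s)] when [L] is the derivative. *)
Definition deriv_rem (F : R -> R) (t0 L s : R) : R := F (t0 + s) - L * sin s - F t0 * cos s.

Lemma derivable_pt_lim_deriv_rem (F : R -> R) t0 L : derivable_pt_lim F t0 L ->
  forall eps, 0 < eps -> exists d, 0 < d /\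
    forall s, Rabs s < d -> Rabs (deriv_rem F t0 L s) <= eps * Rabs s.
Proof.
  intros HD eps He. unfold deriv_rem.
  assert (Hq : forall c, 0 < eps / (3 * (Rabs c + 1)))
    by (intros c; apply Rdiv_lt_0_compat; [lra|pose proof (Rabs_pos c); lra]).
  assert (Hsmall : forall c z, Rabs z < eps / (3 * (Rabs c + 1)) -> Rabs c * Rabs z <= eps / 3).
  { intros c z Hz. apply Rle_trans with ((Rabs c + 1) * (eps / (3 * (Rabs c + 1)))).
    - apply Rmult_le_compat; try apply Rabs_pos; lra.
    - right. field. pose proof (Rabs_pos c). lra. }
  destruct (HD (eps / 3) ltac:(lra)) as [d1 H1].
  destruct (derivable_pt_lim_sin 0 _ (Hq L)) as [d2 H2].
  destruct (derivable_pt_lim_cos 0 _ (Hq (F t0))) as [d3 H3].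
  exists (Rmin d1 (Rmin d2 d3)). split.
  { apply Rmin_glb_lt; [apply cond_pos|apply Rmin_glb_lt; apply cond_pos]. }
  intros s Hs. pose proof (Rmin_l d1 (Rmin d2 d3)). pose proof (Rmin_r d1 (Rmin d2 d3)).
  pose proof (Rmin_l d2 d3). pose proof (Rmin_r d2 d3).
  destruct (Req_dec s 0) as [->|Hs0].
  { rewrite Rplus_0_r, sin_0, cos_0, Rabs_R0, Rmult_0_r, Rmult_1_r, Rmult_0_r, Rminus_0_r,
      Rminus_diag, Rabs_R0. lra. }
  specialize (H1 s Hs0 ltac:(lra)). specialize (H2 s Hs0 ltac:(lra)). specialize (H3 s Hs0 ltac:(lra)).
  rewrite Rplus_0_l, sin_0, cos_0, Rminus_0_r in H2.
  rewrite Rplus_0_l, cos_0, sin_0, Ropp_0, Rminus_0_r in H3.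
  replace (F (t0 + s) - L * sin s - F t0 * cos s) with
    (s * (((F (t0 + s) - F t0) / s - L) - L * (sin s / s - 1) - F t0 * ((cos s - 1) / s)))
    by (field; auto).
  rewrite Rabs_mult, (Rmult_comm eps). apply Rmult_le_compat_l; [apply Rabs_pos|].
  eapply Rle_trans; [apply Rabs_triang|]. eapply Rle_trans; [apply Rplus_le_compat_r, Rabs_triang|].
  rewrite !Rabs_Ropp, !Rabs_mult.
  pose proof (Hsmall L _ H2). pose proof (Hsmall (F t0) _ H3). lra.
Qed.

Lemma Rabs_le_local_global (G : R -> R) eps d A s : 0 < d -> 0 <= eps -> 0 <= A ->
  (forall s, Rabs s < d -> Rabs (G s) <= eps * Rabs s) -> (forall s, Rabs (G s) <= A) ->
  Rabs (G s) <= eps * Rabs s + A / (d * d) * (s * s).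
Proof.
  intros Hd He HA Hloc Hglob.
  assert (0 <= A / (d * d) * (s * s)) by (apply Rmult_le_pos; [apply Rdiv_le_0_compat|]; nra).
  assert (0 <= eps * Rabs s) by (apply Rmult_le_pos; [lra|apply Rabs_pos]).
  destruct (Rlt_dec (Rabs s) d) as [Hs|Hs].
  - pose proof (Hloc s Hs). lra.
  - assert (d * d <= s * s).
    { rewrite <- (Rabs_pos_eq (s * s)), Rabs_mult by nra. apply Rmult_le_compat; lra. }
    assert (A <= A / (d * d) * (s * s)).
    { replace (A / (d * d) * (s * s)) with (A * ((s * s) / (d * d))) by (field; lra).
      rewrite <- (Rmult_1_r A) at 1. apply Rmult_le_compat_l; auto.
      apply (Rmult_le_reg_r (d * d)); [nra|]. replace (s * s / (d * d) * (d * d)) with (s * s)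
        by (field; lra). lra. }
    pose proof (Hglob s). lra.
Qed.

Lemma Rabs_RInt_jackson_local_le (G w : R -> R) r eps d A W :
  continuity G -> continuity w -> 0 < r -> 0 < d -> 0 <= eps -> 0 <= A -> 0 <= W ->
  (forall s, Rabs s < d -> Rabs (G s) <= eps * Rabs s) -> (forall s, Rabs (G s) <= A) ->
  (forall u, Rabs (w u) <= r) ->
  Rabs (RInt (fun u => jackson u * (G (u * r) * w u)) (- W) W)
  <= 5000 * (eps * r * r + A * r * r * r / (d * d)).
Proof.
  intros HG Hw Hr Hd He HA HW Hloc Hglob Hwr.
  assert (HB : 0 <= A * r * r * r / (d * d))
    by (apply Rdiv_le_0_compat; [repeat apply Rmult_le_pos|]; nra).
  assert (0 <= eps * r * r) by (repeat apply Rmult_le_pos; lra).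
  set (c := eps * r * r + A * r * r * r / (d * d)).
  assert (Hmaj : continuity (fun u => 1250 / (1 + u * u)))
    by (apply continuity_ex_derive; intros; auto_derive; nra).
  apply Rle_trans with (RInt (fun u => c * (1250 / (1 + u * u))) (- W) W).
  - apply Rabs_RInt_le; [lra| | |].
    + apply ex_RInt_continuity, (continuity_mult jackson); [apply jackson_continuity|].
      apply (continuity_mult (fun u => G (u * r)) w); auto.
      apply (continuity_comp (fun u => u * r) G); auto.
      apply continuity_ex_derive. intros. auto_derive. auto.
    + apply ex_RInt_continuity, (continuity_scal _ c Hmaj).
    + intros u _.
      pose proof (Rabs_le_local_global G eps d A (u * r) Hd He HA Hloc Hglob) as HGu.
      rewrite Rabs_mult, (Rabs_pos_eq r) in HGu by lra.
      pose proof (jackson_ge0 u). pose proof (Rabs_mul_jackson_le u). pose proof (sqr_mul_jackson_le u).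
      pose proof (Hwr u). pose proof (Rabs_pos (w u)). pose proof (Rabs_pos (G (u * r))).
      rewrite !Rabs_mult, (Rabs_pos_eq (jackson u)) by auto.
      apply Rle_trans with (jackson u * ((eps * (Rabs u * r) + A / (d * d) * (u * r * (u * r))) * r)).
      { apply Rmult_le_compat_l; auto. apply Rmult_le_compat; auto. }
      replace (jackson u * ((eps * (Rabs u * r) + A / (d * d) * (u * r * (u * r))) * r))
        with (eps * r * r * (Rabs u * jackson u) + A * r * r * r / (d * d) * (u * u * jackson u))
        by (field; lra).
      unfold c. rewrite Rmult_plus_distr_r.
      apply Rplus_le_compat; apply Rmult_le_compat_l; auto.
  - rewrite RInt_scal_R by (apply ex_RInt_continuity, Hmaj).
    pose proof (RInt_div_1_plus_sqr_le 1250 W ltac:(lra) HW).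
    assert (0 <= c) by (unfold c; lra). nra.
Qed.

(** * Lacunary trigonometric series *)

Section LacunarySeries.

Variables (m x y lam : nat -> R) (c0 msum : R) (F : R -> R).
Hypothesis m_pos : forall n, 0 < m n.
Hypothesis m_succ_le : forall n, m (S n) <= m n.
Hypothesis m_sum : infinite_sum m msum.
Hypothesis xy_norm : forall n, x n * x n + y n * y n = m n * m n.
Hypothesis c0_ge1 : 1 <= c0.
Hypothesis lam_eq : forall n, lam n = (c0 + INR n) / m n.
Hypothesis F_sum : forall t, infinite_sum (fun n => cos_sin_comb (x n) (y n) (lam n) t) (F t).

Lemma m_ge0 n : 0 <= m n.
Proof. left. apply m_pos. Qed.

Lemma Rabs_term_le n t : Rabs (cos_sin_comb (x n) (y n) (lam n) t) <= m n.
Proof. apply Rabs_cos_sin_comb_le; [apply xy_norm|apply m_ge0]. Qed.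

Lemma F_continuity : continuity F.
Proof.
  apply (M_test_continuity (fun n => cos_sin_comb (x n) (y n) (lam n)) m msum);
    auto using continuity_cos_sin_comb, Rabs_term_le.
Qed.

Lemma Rabs_F_le t : Rabs (F t) <= msum.
Proof.
  pose proof (Rabs_infinite_sum_tail_le _ m (F t) msum 0 (fun n => Rabs_term_le n t) (F_sum t) m_sum) as H.
  simpl in H. pose proof (Rabs_term_le 0 t).
  pose proof (Rabs_triang (F t - cos_sin_comb (x 0) (y 0) (lam 0) t) (cos_sin_comb (x 0) (y 0) (lam 0) t)).
  replace (F t - cos_sin_comb (x 0) (y 0) (lam 0) t + cos_sin_comb (x 0) (y 0) (lam 0) t) with (F t)
    in * by ring.
  lra.
Qed.

Lemma m_antitone k n : (k <= n)%nat -> m n <= m k.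
Proof. intros Hkn. induction Hkn as [|n Hkn IH]; [lra|]. pose proof (m_succ_le n). lra. Qed.

Lemma m_mul_lam n : m n * lam n = c0 + INR n.
Proof. rewrite lam_eq. pose proof (m_pos n). field. lra. Qed.

(* The only place where the monotonicity of [m] is used. *)
Lemma m_mul_lam_gap k n : k <> n -> 1 <= Rabs (m n * lam k - m n * lam n).
Proof.
  intros Hkn. pose proof (m_pos n). pose proof (m_pos k).
  rewrite m_mul_lam, lam_eq.
  replace (m n * ((c0 + INR k) / m k)) with (m n / m k * (c0 + INR k)) by (field; lra).
  pose proof (pos_INR k).
  destruct (Compare_dec.lt_dec k n) as [Hlt|Hgt].
  - assert (m n / m k <= 1).
    { apply (Rmult_le_reg_r (m k)); auto. unfold Rdiv. rewrite Rmult_assoc, Rinv_l by lra.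
      pose proof (m_antitone k n ltac:(lia)). lra. }
    assert (0 <= m n / m k) by (apply Rdiv_le_0_compat; lra).
    assert (INR k + 1 <= INR n) by (rewrite <- S_INR; apply le_INR; lia).
    rewrite Rabs_left1; nra.
  - assert (1 <= m n / m k).
    { apply (Rmult_le_reg_r (m k)); auto. unfold Rdiv. rewrite Rmult_assoc, Rinv_l by lra.
      pose proof (m_antitone n k ltac:(lia)). lra. }
    assert (INR n + 1 <= INR k) by (rewrite <- S_INR; apply le_INR; lia).
    rewrite Rabs_pos_eq; nra.
Qed.

Section Test.

Variables t0 L : R.

Definition shift_cos k := cos_sin_comb (x k) (y k) (lam k) t0.
Definition shift_sin k := cos_sin_comb (y k) (- x k) (lam k) t0.

Definition wave r k u := cos_sin_comb (shift_cos k) (shift_sin k) (r * lam k) u.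

Lemma term_shift_eq r k u : cos_sin_comb (x k) (y k) (lam k) (t0 + u * r) = wave r k u.
Proof. apply cos_sin_comb_shift. Qed.

Lemma shift_norm k : shift_cos k * shift_cos k + shift_sin k * shift_sin k = m k * m k.
Proof. unfold shift_cos, shift_sin. rewrite cos_sin_comb_shift_norm. apply xy_norm. Qed.

Lemma Rabs_wave_le r k u : Rabs (wave r k u) <= m k.
Proof. apply Rabs_cos_sin_comb_le; [apply shift_norm|apply m_ge0]. Qed.

Lemma continuity_deriv_rem : continuity (deriv_rem F t0 L).
Proof.
  unfold deriv_rem. apply continuity_minus; [apply continuity_minus|].
  - apply (continuity_comp (fun s => t0 + s) F); [|apply F_continuity].
    apply continuity_ex_derive. intros. auto_derive. auto.
  - apply (continuity_scal sin L continuity_sin).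
  - apply (continuity_scal cos (F t0) continuity_cos).
Qed.

Lemma Rabs_deriv_rem_le s : Rabs (deriv_rem F t0 L s) <= msum + Rabs L + Rabs (F t0).
Proof.
  unfold deriv_rem. pose proof (Rabs_F_le (t0 + s)).
  assert (Rabs (sin s) <= 1) by (apply Rabs_le, SIN_bound).
  assert (Rabs (cos s) <= 1) by (apply Rabs_le, COS_bound).
  assert (Rabs (L * sin s) <= Rabs L)
    by (rewrite Rabs_mult; pose proof (Rabs_pos L); pose proof (Rabs_pos (sin s)); nra).
  assert (Rabs (F t0 * cos s) <= Rabs (F t0))
    by (rewrite Rabs_mult; pose proof (Rabs_pos (F t0)); pose proof (Rabs_pos (cos s)); nra).
  unfold Rminus. eapply Rle_trans; [apply Rabs_triang|]. rewrite Rabs_Ropp.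
  eapply Rle_trans; [apply Rplus_le_compat_r, Rabs_triang|]. rewrite Rabs_Ropp. lra.
Qed.

Definition partial_sum_int r n N W :=
  RInt (fun u => jackson u * (sum_f_R0 (fun k => wave r k u) N * wave r n u)) (- W) W.

Lemma partial_sum_int_ge n N W : (1 <= n)%nat -> m n <= 1 -> 1 <= W -> (n <= N)%nat ->
  m n * m n / 2 * (1 / 8 - 1250 / W) - msum * m n * (1250 / W) <= partial_sum_int (m n) n N W.
Proof.
  intros Hn Hmn HW HnN. set (r := m n). set (T := 1250 / W).
  assert (Hr : 0 < r) by apply m_pos.
  assert (HT : 0 <= T) by (apply Rdiv_le_0_compat; lra).
  assert (Hlam_n : r * lam n = c0 + INR n) by apply m_mul_lam.
  assert (HINR : 1 <= INR n) by (change 1 with (INR 1); apply le_INR; auto).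
  assert (Hsum : partial_sum_int r n N W = sum_f_R0 (fun k => jackson_pair_int
            (shift_cos k) (shift_sin k) (r * lam k) (shift_cos n) (shift_sin n) (r * lam n) W) N).
  { unfold partial_sum_int, jackson_pair_int.
    rewrite <- (RInt_sum_f_R0 (fun k u => jackson u * (wave r k u * wave r n u))).
    - apply RInt_ext_R. intros u _.
      transitivity ((jackson u * wave r n u) * sum_f_R0 (fun k => wave r k u) N); [ring|].
      rewrite scal_sum. apply sum_eq. intros. ring.
    - intros k. apply (continuity_mult jackson); [apply jackson_continuity|].
      apply (continuity_mult (cos_sin_comb _ _ _)); apply continuity_cos_sin_comb. }
  rewrite Hsum.
  eapply Rle_trans; [|apply (sum_f_R0_ge_single _ (fun k => m k * (r * T)) n
                             (r * r / 2 * (jackson_cos_int 0 W - T)))]; auto.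
  - pose proof (jackson_cos_int_0_ge W HW).
    rewrite <- scal_sum. pose proof (sum_f_R0_le_infinite_sum m msum N m_ge0 m_sum).
    assert (0 <= r * T) by (apply Rmult_le_pos; lra).
    assert (r * r / 2 * (1 / 8) <= r * r / 2 * jackson_cos_int 0 W)
      by (apply Rmult_le_compat_l; nra).
    nra.
  - intros k Hk. rewrite <- Rmult_assoc. apply Rabs_jackson_pair_int_le; auto using m_ge0; try lra.
    + right. apply shift_norm.
    + right. apply shift_norm.
    + apply m_mul_lam_gap. auto.
    + assert (0 < r * lam k) by (rewrite lam_eq; pose proof (m_pos k); pose proof (pos_INR k);
        apply Rmult_lt_0_compat; [|apply Rdiv_lt_0_compat]; lra).
      rewrite Rabs_pos_eq; lra.
  - intros k. pose proof (m_ge0 k). apply Rmult_le_pos; [|apply Rmult_le_pos]; lra.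
  - pose proof (shift_norm n) as Hn2. fold r in Hn2. rewrite <- Hn2.
    apply jackson_pair_int_diag_ge; auto.
    rewrite Rabs_pos_eq; lra.
Qed.

Lemma continuity_wave r k : continuity (wave r k).
Proof. apply continuity_cos_sin_comb. Qed.

Lemma continuity_shifted_F r : continuity (fun u => F (t0 + u * r)).
Proof.
  apply (continuity_comp (fun u => t0 + u * r) F); [|apply F_continuity].
  apply continuity_ex_derive. intros. auto_derive. auto.
Qed.

Definition tail_int r n N W :=
  RInt (fun u => jackson u *
          ((F (t0 + u * r) - sum_f_R0 (fun k => wave r k u) N) * wave r n u)) (- W) W.

Lemma Rabs_tail_int_le r n N W : 0 <= W ->
  Rabs (tail_int r n N W) <= 2 * W * ((msum - sum_f_R0 m N) * m n).
Proof.
  intros HW. unfold tail_int.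
  replace (2 * W * ((msum - sum_f_R0 m N) * m n))
    with (RInt (fun _ => (msum - sum_f_R0 m N) * m n) (- W) W)
    by (rewrite RInt_const; unfold scal; simpl; unfold mult; simpl; ring).
  apply Rabs_RInt_le; [lra| |apply ex_RInt_const|].
  - apply ex_RInt_continuity, (continuity_mult jackson); [apply jackson_continuity|].
    apply continuity_mult; [apply continuity_minus|apply continuity_wave].
    + apply continuity_shifted_F.
    + apply continuity_sum_f_R0. intros. apply continuity_wave.
  - intros u _. rewrite !Rabs_mult. pose proof (jackson_ge0 u). pose proof (jackson_le1 u).
    rewrite (Rabs_pos_eq (jackson u)) by auto.
    assert (Htail : Rabs (F (t0 + u * r) - sum_f_R0 (fun k => wave r k u) N) <= msum - sum_f_R0 m N).
    { apply (Rabs_infinite_sum_tail_le (fun k => wave r k u)); auto.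
      - intros. apply Rabs_wave_le.
      - eapply Un_cv_ext; [|apply F_sum]. intros N'. apply sum_eq. intros. apply term_shift_eq. }
    pose proof (Rabs_wave_le r n u). pose proof (Rabs_pos (wave r n u)).
    pose proof (Rabs_pos (F (t0 + u * r) - sum_f_R0 (fun k => wave r k u) N)).
    apply Rle_trans with (1 * ((msum - sum_f_R0 m N) * m n)); [|lra].
    apply Rmult_le_compat; auto; [apply Rmult_le_pos; auto|].
    apply Rmult_le_compat; auto.
Qed.

Definition test_int n W :=
  RInt (fun u => jackson u * (deriv_rem F t0 L (u * m n) * wave (m n) n u)) (- W) W.

Lemma test_int_eq n N W :
  test_int n W = partial_sum_int (m n) n N W + tail_int (m n) n N W
    - L * jackson_pair_int 0 1 (m n) (shift_cos n) (shift_sin n) (m n * lam n) W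
    - F t0 * jackson_pair_int 1 0 (m n) (shift_cos n) (shift_sin n) (m n * lam n) W.
Proof.
  set (r := m n). unfold test_int, partial_sum_int, tail_int, jackson_pair_int. fold r.
  change (cos_sin_comb (shift_cos n) (shift_sin n) (r * lam n)) with (wave r n).
  rewrite (RInt_ext_R _ (fun u =>
      1 * (jackson u * (sum_f_R0 (fun k => wave r k u) N * wave r n u))
    + 1 * (jackson u * ((F (t0 + u * r) - sum_f_R0 (fun k => wave r k u) N) * wave r n u))
    + (- L) * (jackson u * (cos_sin_comb 0 1 r u * wave r n u))
    + (- F t0) * (jackson u * (cos_sin_comb 1 0 r u * wave r n u)) + 0 * 0)).
  2: { intros u _. unfold deriv_rem, cos_sin_comb at 1 2. rewrite (Rmult_comm r u). ring. }
  assert (Hc : forall f, continuity f -> continuity (fun u => jackson u * (f u * wave r n u))).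
  { intros f Hf. apply (continuity_mult jackson); [apply jackson_continuity|].
    apply (continuity_mult f); auto. apply continuity_wave. }
  rewrite (RInt_lincomb5 _ _ _ _ (fun _ => 0)).
  - rewrite RInt_const. unfold scal; simpl. unfold mult; simpl. ring.
  - apply Hc. apply continuity_sum_f_R0. intros. apply continuity_wave.
  - apply Hc. apply continuity_minus; [apply continuity_shifted_F|].
    apply continuity_sum_f_R0. intros. apply continuity_wave.
  - apply Hc, continuity_cos_sin_comb.
  - apply Hc, continuity_cos_sin_comb.
  - apply continuity_const. intros ? ?. reflexivity.
Qed.

Lemma Rabs_slow_wave_pair_int_le n a b W : (1 <= n)%nat -> m n <= 1 -> 1 <= W ->
  a * a + b * b <= 1 ->
  Rabs (jackson_pair_int a b (m n) (shift_cos n) (shift_sin n) (m n * lam n) W) <= m n * (1250 / W).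
Proof.
  intros Hn Hmn HW Hab.
  assert (HINR : 1 <= INR n) by (change 1 with (INR 1); apply le_INR; auto).
  pose proof (m_mul_lam n) as Hlam_n. pose proof (m_pos n).
  replace (m n * (1250 / W)) with (1 * m n * (1250 / W)) by ring.
  apply Rabs_jackson_pair_int_le; try lra; [right; apply shift_norm| |].
  - rewrite Hlam_n, Rabs_left1; lra.
  - rewrite Hlam_n, Rabs_pos_eq; lra.
Qed.

Lemma test_int_ge n W : (1 <= n)%nat -> m n <= 1 -> 1 <= W ->
  m n * m n / 2 * (1 / 8 - 1250 / W) - (msum + Rabs L + Rabs (F t0)) * m n * (1250 / W)
  <= test_int n W.
Proof.
  intros Hn Hmn HW.
  assert (Hslow : forall c a b, a * a + b * b <= 1 -> - (Rabs c * (m n * (1250 / W)))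
            <= - c * jackson_pair_int a b (m n) (shift_cos n) (shift_sin n) (m n * lam n) W).
  { intros c a b Hab. rewrite <- Ropp_mult_distr_l. apply Ropp_le_contravar.
    eapply Rle_trans; [apply Rle_abs|]. rewrite Rabs_mult.
    apply Rmult_le_compat_l; [apply Rabs_pos|]. apply Rabs_slow_wave_pair_int_le; auto. }
  pose proof (Hslow L 0 1 ltac:(lra)). pose proof (Hslow (F t0) 1 0 ltac:(lra)).
  pose proof (m_pos n).
  apply (le_of_le_add_infinite_sum_tail m msum _ _ (2 * W * m n) n m_sum ltac:(nra)).
  intros N HnN. rewrite (test_int_eq n N W).
  pose proof (partial_sum_int_ge n N W Hn Hmn HW HnN).
  pose proof (Rabs_tail_int_le (m n) n N W ltac:(lra)) as Htail. apply Rabs_le_between in Htail.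
  lra.
Qed.

Lemma test_int_ge_sqr n W : (1 <= n)%nat -> m n <= 1 ->
  320000 * (1 + (msum + Rabs L + Rabs (F t0)) / m n) <= W ->
  29 / 512 * (m n * m n) <= test_int n W.
Proof.
  intros Hn Hmn HW. set (A := msum + Rabs L + Rabs (F t0)) in *. set (r := m n) in *.
  assert (Hr : 0 < r) by apply m_pos.
  assert (HA : 0 <= A) by (pose proof (Rabs_F_le t0); pose proof (Rabs_pos (F t0));
                           pose proof (Rabs_pos L); unfold A; lra).
  assert (HAr : 0 <= A / r) by (apply Rdiv_le_0_compat; lra).
  assert (HT : 1250 / W <= 1 / 256).
  { apply (Rmult_le_reg_r W); [lra|]. replace (1250 / W * W) with 1250 by (field; lra). lra. }
  assert (HAT : A * (1250 / W) <= r / 256).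
  { apply (Rmult_le_reg_r W); [lra|].
    replace (A * (1250 / W) * W) with (A * 1250) by (field; lra).
    apply Rle_trans with (r / 256 * (320000 * (1 + A / r))); [|apply Rmult_le_compat_l; lra].
    replace (r / 256 * (320000 * (1 + A / r))) with (1250 * (r + A)) by (field; lra). lra. }
  pose proof (test_int_ge n W Hn Hmn ltac:(lra)) as H. fold A r in H.
  assert (r * r * (1250 / W) <= r * r / 256) by nra.
  nra.
Qed.

Lemma Rabs_test_int_le eps d n W : 0 <= eps -> 0 < d -> 0 <= W ->
  (forall s, Rabs s < d -> Rabs (deriv_rem F t0 L s) <= eps * Rabs s) ->
  Rabs (test_int n W)
  <= 5000 * (eps * (m n * m n) + (msum + Rabs L + Rabs (F t0)) * m n / (d * d) * (m n * m n)).
Proof.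
  intros He Hd HW Hloc. pose proof (m_pos n).
  assert (0 <= msum + Rabs L + Rabs (F t0))
    by (pose proof (Rabs_F_le t0); pose proof (Rabs_pos (F t0)); pose proof (Rabs_pos L); lra).
  replace (eps * (m n * m n) + (msum + Rabs L + Rabs (F t0)) * m n / (d * d) * (m n * m n))
    with (eps * m n * m n + (msum + Rabs L + Rabs (F t0)) * m n * m n * m n / (d * d))
    by (field; lra).
  apply Rabs_RInt_jackson_local_le; auto using continuity_deriv_rem, continuity_wave,
    Rabs_deriv_rem_le, Rabs_wave_le.
Qed.

Lemma F_not_derivable : ~ derivable_pt_lim F t0 L.
Proof.
  intros HD.
  set (A := msum + Rabs L + Rabs (F t0)).
  assert (HA : 0 <= A) by (pose proof (Rabs_F_le t0); pose proof (Rabs_pos (F t0));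
                           pose proof (Rabs_pos L); unfold A; lra).
  destruct (derivable_pt_lim_deriv_rem F t0 L HD (/ 1280000) ltac:(lra)) as [d [Hd Hloc]].
  set (kap := Rmin 1 (d * d / (1280000 * (A + 1)))).
  assert (Hkap : 0 < kap) by (apply Rmin_glb_lt; [lra|apply Rdiv_lt_0_compat; nra]).
  destruct (infinite_sum_terms_lt m msum kap m_sum Hkap) as [N0 HN0].
  set (n := S N0). set (r := m n).
  assert (Hr : 0 < r) by apply m_pos.
  assert (Hrk : r < kap)
    by (specialize (HN0 N0 (le_n _)); rewrite Rabs_pos_eq in HN0; auto using m_ge0).
  pose proof (Rmin_l 1 (d * d / (1280000 * (A + 1)))) as Hk1.
  pose proof (Rmin_r 1 (d * d / (1280000 * (A + 1)))) as Hk2. fold kap in Hk1, Hk2.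
  assert (HAr : A * r / (d * d) <= / 1280000).
  { apply (Rmult_le_reg_r (d * d)); [nra|].
    replace (A * r / (d * d) * (d * d)) with (A * r) by (field; lra).
    assert (r * (A + 1) <= d * d / 1280000).
    { apply (Rmult_le_reg_r (/ (A + 1))); [apply Rinv_0_lt_compat; lra|].
      rewrite Rmult_assoc, Rinv_r by lra.
      replace (d * d / 1280000 * / (A + 1)) with (d * d / (1280000 * (A + 1))) by (field; lra).
      lra. }
    nra. }
  set (W := 320000 * (1 + A / r)).
  assert (HW : 0 <= W) by (unfold W; pose proof (Rdiv_le_0_compat A r HA Hr); lra).
  pose proof (test_int_ge_sqr n W ltac:(unfold n; lia) ltac:(fold r; lra) (Rle_refl _)) as Hlow.
  pose proof (Rabs_test_int_le (/ 1280000) d n W ltac:(lra) Hd HW Hloc) as Hup.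
  fold A r in Hlow, Hup. apply Rabs_le_between in Hup.
  assert (0 < r * r) by nra.
  assert (A * r / (d * d) * (r * r) <= / 1280000 * (r * r)) by (apply Rmult_le_compat_r; lra).
  lra.
Qed.

End Test.

Theorem lacunary_series_continuity_nowhere_differentiable :
  continuity F /\ forall t, ~ differentiable_at F t.
Proof.
  split; [apply F_continuity|]. intros t [l Hl]. exact (F_not_derivable t l Hl).
Qed.

End LacunarySeries.

Lemma cmod_sqr ar ai j : cmod ar ai j * cmod ar ai j = ar j * ar j + ai j * ai j.
Proof. unfold cmod. rewrite sqrt_sqrt; [ring|nra]. Qed.

Lemma sum_gt_ext J (u v : nat -> R) l : (forall j, u j = v j) -> sum_gt J u l -> sum_gt J v l.
Proof. intros E. apply Un_cv_ext. intros N. apply sum_eq. intros. apply E. Qed.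

Lemma sum_gt_continuity_nowhere_differentiable J ar ai (x y : nat -> R) msum (G : R -> R) :
  sum_gt J (cmod ar ai) msum ->
  (forall j, (J < j)%nat -> cmod ar ai j >= cmod ar ai (S j) /\ cmod ar ai (S j) > 0) ->
  (forall j, x j * x j + y j * y j = ar j * ar j + ai j * ai j) ->
  (forall t, sum_gt J (fun j => cos_sin_comb (x j) (y j) (freq ar ai j) t) (G t)) ->
  continuity G /\ forall t, ~ differentiable_at G t.
Proof.
  intros Hsum Hmono Hxy HG.
  set (m n := cmod ar ai (J + 1 + n)).
  assert (Hm : forall n, m n >= m (S n) /\ m (S n) > 0).
  { intros n. unfold m. replace (J + 1 + S n)%nat with (S (J + 1 + n)) by lia. apply Hmono. lia. }
  apply (lacunary_series_continuity_nowhere_differentiable m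
           (fun n => x (J + 1 + n)%nat) (fun n => y (J + 1 + n)%nat)
           (fun n => freq ar ai (J + 1 + n)) (INR (J + 1)) msum); auto.
  - intros n. destruct (Hm n). lra.
  - intros n. destruct (Hm n). lra.
  - intros n. unfold m. rewrite cmod_sqr. apply Hxy.
  - rewrite plus_INR. pose proof (pos_INR J). simpl. lra.
  - intros n. unfold freq, m. rewrite <- plus_INR. reflexivity.
Qed.

Theorem corollary4p1 (J : nat) (ar ai : nat -> R)
  (Hsum : exists L, sum_gt J (cmod ar ai) L)
  (Hmono : forall j : nat, (J < j)%nat ->
     cmod ar ai j >= cmod ar ai (S j) /\ cmod ar ai (S j) > 0)
  (Hconv : exists phi : R -> R, convex_on_gt J phi /\
     forall j : nat, (J < j)%nat -> phi (INR j) = INR j / cmod ar ai j)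
  (Ref Imf : R -> R)
  (HRe : forall t, sum_gt J (re_term ar ai t) (Ref t))
  (HIm : forall t, sum_gt J (im_term ar ai t) (Imf t)) :
  continuity Ref /\ continuity Imf /\
  (forall t, ~ (differentiable_at Ref t /\ differentiable_at Imf t)) /\
  (forall t, ~ differentiable_at Ref t) /\
  (forall t, ~ differentiable_at Imf t).
Proof.
  destruct Hsum as [msum Hsum].
  destruct (sum_gt_continuity_nowhere_differentiable J ar ai ar (fun j => - ai j) msum Ref Hsum Hmono)
    as [HcRe HdRe]; [intros; ring| |].
  { intros t. apply (sum_gt_ext _ (re_term ar ai t)); [|apply HRe].
    intros j. unfold re_term, cos_sin_comb. rewrite !(Rmult_comm t). ring. }
  destruct (sum_gt_continuity_nowhere_differentiable J ar ai ai ar msum Imf Hsum Hmono)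
    as [HcIm HdIm]; [intros; ring| |].
  { intros t. apply (sum_gt_ext _ (im_term ar ai t)); [|apply HIm].
    intros j. unfold im_term, cos_sin_comb. rewrite !(Rmult_comm t). ring. }
  repeat split; auto. intros t [H _]. exact (HdRe t H).
Qed.
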